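(* Let $g$ be a nondegenerate symmetric bilinear form on $\mathbb{R}^n$, $P\subset\mathbb{R}^n$ a subspace, $R:[0,1]\to\mathcal L(\mathbb{R}^n)$ continuous, and $Y:[0,1]\to\mathbb{R}^n$ a solution of $Y''=RY$ with $g(Y,Y)<0$ on $[0,1]$. Then the map $[0,1]\ni t\mapsto F_t\in\mathcal L(\mathcal H,\widetilde{\mathcal H})$ is of class $C^1$.
   Context: $\mathcal H=\{\hat V\in H^1([0,1],\mathbb{R}^n):\hat V(0)\in P,\hat V(1)=0\}$ with the $H^1$ norm; $\widetilde{\mathcal H}=L^2([0,1],\mathbb{R})/\mathfrak C$ with $\mathfrak C$ the constant functions; $\mathcal L(\mathcal H,\widetilde{\mathcal H})$ carries the operator norm. $F_t(\hat V)(u)=g(\hat V'(u),Y(tu))-t\,g(\hat V(u),Y'(tu))+\mathfrak C$. *)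

From HB Require Import structures.
From mathcomp Require Import all_boot all_order all_algebra.
From mathcomp Require Import all_classical all_reals all_analysis.
Set Implicit Arguments. Unset Strict Implicit. Unset Printing Implicit Defensive.
Import Order.TTheory GRing.Theory Num.Theory.
Import numFieldNormedType.Exports.
Local Open Scope classical_set_scope.
Local Open Scope ring_scope.

(* Points of R^n are row vectors 'rV[R]_n; an endomorphism of R^n is a
   matrix A : 'M[R]_n acting (mathcomp convention) on the right: v |-> v *m A.
   A subspace P of R^n is the row space of a matrix P : 'M[R]_n. *)

Definition sqn (R : realType) (n : nat) (v : 'rV[R]_n) : R :=
  \sum_(i < n) v ord0 i ^+ 2.

Definition sym_nondeg_bilinear (R : realType) (n : nat)
    (g : 'rV[R]_n -> 'rV[R]_n -> R) : Prop :=
  (forall (a : R) (x y z : 'rV[R]_n), g (a *: x + y) z = a * g x z + g y z) /\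
  (forall x y, g x y = g y x) /\
  (forall x, (forall y, g x y = 0) -> x = 0).

(* (V, W) represents an element V of
   H = {V in H^1([0,1],R^n) : V(0) in P, V(1) = 0},
   W being (a representative of) its weak derivative V' in L^2:
   V is the absolutely continuous function V(u) = V(0) + int_0^u W. *)
Definition inH (R : realType) (n : nat) (P : 'M[R]_n)
    (V W : R -> 'rV[R]_n) : Prop :=
  (forall i : 'I_n,
     (@lebesgue_measure R).-integrable `[0%R, 1%R] (fun s => (W s ord0 i)%:E)) /\
  (\int[@lebesgue_measure R]_(s in `[0%R, 1%R]) (sqn (W s))%:E < +oo)%E /\
  (forall u, u \in `[0%R, 1%R] ->
     V u = V 0 + \row_(i < n)
             fine (\int[@lebesgue_measure R]_(s in `[0%R, u]) (W s ord0 i)%:E)) /\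
  (V 0 <= P)%MS /\ V 1 = 0.

Definition Hnorm2 (R : realType) (n : nat) (V W : R -> 'rV[R]_n) : \bar R :=
  \int[@lebesgue_measure R]_(s in `[0%R, 1%R]) (sqn (V s) + sqn (W s))%R%:E.

Definition L2dist2_const (R : realType) (f : R -> R) (c : R) : \bar R :=
  \int[@lebesgue_measure R]_(s in `[0%R, 1%R]) ((f s - c) ^+ 2)%:E.

(* squared norm of the class of f in L^2([0,1],R)/constants:
   the infimum over constants c of the squared L^2 distance from f to c *)
Definition Qnorm2 (R : realType) (f : R -> R) : \bar R :=
  ereal_inf ((L2dist2_const f) @` [set: R]).

(* F_t(V)(u) = g(V'(u), Y(tu)) - t g(V(u), Y'(tu))  (modulo constants) *)
Definition Fop (R : realType) (n : nat) (g : 'rV[R]_n -> 'rV[R]_n -> R)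
    (Y : R -> 'rV[R]_n) (t : R) (V W : R -> 'rV[R]_n) : R -> R :=
  fun u => g (W u) (Y (t * u)) - t * g (V u) (derive1 Y (t * u)).

(* A family (t in [0,1]) of maps F t : H -> L^2/C is of class C^1 into the
   space L(H, L^2/C) with the operator norm: each F t is bounded, and there is
   a family G t of bounded operators H -> L^2/C, continuous in t for the
   operator norm, which is the derivative (one-sided at the endpoints)
   of t |-> F t in operator norm.  Norms are squared throughout. *)
Definition C1_opfamily (R : realType) (n : nat) (P : 'M[R]_n)
    (F : R -> (R -> 'rV[R]_n) -> (R -> 'rV[R]_n) -> R -> R) : Prop :=
  (forall t : R, t \in `[0%R, 1%R] -> exists C : R, forall V W, inH P V W ->
      (Qnorm2 (F t V W) <= C%:E * Hnorm2 V W)%E) /\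
  exists G : R -> (R -> 'rV[R]_n) -> (R -> 'rV[R]_n) -> R -> R,
    (forall (t : R) V W, t \in `[0%R, 1%R] -> inH P V W ->
       measurable_fun (`[0%R, 1%R] : set R) (G t V W)) /\
    (forall t : R, t \in `[0%R, 1%R] -> exists C : R, forall V W, inH P V W ->
       (Qnorm2 (G t V W) <= C%:E * Hnorm2 V W)%E) /\
    (forall t : R, t \in `[0%R, 1%R] -> forall eps : R, 0 < eps ->
       exists2 delta : R, 0 < delta & forall s : R, s \in `[0%R, 1%R] ->
         `|s - t| < delta -> forall V W, inH P V W ->
         (Qnorm2 (fun u => F s V W u - F t V W u - (s - t) * G t V W u)%R
            <= ((eps * (s - t)) ^+ 2)%R%:E * Hnorm2 V W)%E) /\
    (forall t : R, t \in `[0%R, 1%R] -> forall eps : R, 0 < eps ->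
       exists2 delta : R, 0 < delta & forall s : R, s \in `[0%R, 1%R] ->
         `|s - t| < delta -> forall V W, inH P V W ->
         (Qnorm2 (fun u => G s V W u - G t V W u)%R
            <= (eps ^+ 2)%R%:E * Hnorm2 V W)%E).

From HB Require Import structures.
From mathcomp Require Import all_boot all_order all_algebra.
From mathcomp Require Import all_classical all_reals all_analysis.
From mathcomp Require Import measurable_realfun ring lra.
Import Order.TTheory GRing.Theory Num.Theory.
Import numFieldNormedType.Exports.
Local Open Scope classical_set_scope.
Local Open Scope ring_scope.

Set Implicit Arguments. Unset Strict Implicit. Unset Printing Implicit Defensive.

(* By bilinearity, F_t V (u) = sum_i V'_i(u) a_i(tu) - t V_i(u) a_i'(tu) with
   a_i = g(e_i, Y), so F_t is a first-order multiplication operator whose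
   coefficients are a_i, a_i' taken at the dilated point tu; Y'' = Y R makes
   a_i'' = g(e_i, Y R) continuous.  Differentiating the coefficients in t gives
   the candidate derivative G_t, and F_t, G_t, the remainder
   F_s - F_t - (s - t) G_t and G_s - G_t all have this coefficient form.
   Comparing with the constant 0, the norm in L^2/C of such an operator is at
   most its L^2 norm, hence at most 2^(n+1) (sup of the coefficients)^2 times
   the H^1 norm; the coefficient bounds come from the mean value theorem and
   the uniform continuity of a_i, a_i', a_i'' on [0, 1]. *)

Section unit_interval.
Context {R : realType}.
Implicit Types (h k : R -> R) (s t u x y : R).

Lemma itv01_mul x y : x \in `[0, 1] -> y \in `[0, 1] -> x * y \in `[0, 1].
Proof.
rewrite !in_itv /= => /andP[x0 x1] /andP[y0 y1].
by rewrite mulr_ge0 //= mulr_ile1.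
Qed.

Lemma itv01_norm_le1 x : x \in `[0, 1] -> `|x| <= 1.
Proof. by rewrite in_itv /= => /andP[x0 x1]; rewrite ger0_norm. Qed.

Lemma itv01_norm_mulr_le x y : y \in `[0, 1] -> `|x * y| <= `|x|.
Proof. by move=> /itv01_norm_le1 y1; rewrite normrM ler_piMr. Qed.

Lemma nbhs_dist_lt t d : 0 < d -> \forall s \near t, `|s - t| < d.
Proof. by move=> d0; apply/nbhs_ballP; exists d => // s; rewrite /ball /= distrC. Qed.

Lemma near_exists_delta t (P : R -> Prop) :
  (\forall s \near t, P s) -> exists2 d, 0 < d & forall s, `|s - t| < d -> P s.
Proof.
by move=> /nbhs_ballP[d d0 dP]; exists d => // s st; apply: dP; rewrite /ball /= distrC.
Qed.

Lemma nbhs_dist_mul_le t M e : 0 <= M -> 0 < e ->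
  \forall s \near t, `|s - t| * M <= e.
Proof.
move=> M0 e0; have M1 : 0 < M + 1 by rewrite ltr_wpDl.
near=> s; have : `|s - t| < e / (M + 1).
  by near: s; apply: nbhs_dist_lt; rewrite divr_gt0.
rewrite ltr_pdivlMr // => lt_e; apply/ltW/(le_lt_trans _ lt_e).
by rewrite ler_wpM2l // lerDl.
Unshelve. all: by end_near. Qed.

Lemma continuous_itv01_bounded n (h : 'I_n -> R -> R) :
  (forall i, {within `[0, 1], continuous (h i)}) ->
  \forall M \near +oo, forall i x, x \in `[0, 1] -> `|h i x| <= M.
Proof.
move=> ch; apply: filter_forall => i.
have /compact_bounded := continuous_compact (ch i) (@segment_compact R 0 1).
rewrite /bounded_set /bounded_near; apply: filterS => M hM x x01.
exact: (hM (h i x)).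
Qed.

Lemma measurable_itv01_dilation h t : {within `[0, 1], continuous h} ->
  t \in `[0, 1] -> measurable_fun (`[0%R, 1%R] : set R) (fun u => h (t * u)).
Proof.
move=> ch t01.
have mh : measurable_fun (`[0%R, 1%R] : set R) h.
  exact: subspace_continuous_measurable_fun.
have mhI := (measurable_restrictT h (measurable_itv `[0%R, 1%R])).1 mh.
have mT := measurableT_comp mhI (mulrl_measurable t).
have mhIt : measurable_fun (`[0%R, 1%R] : set R) ((h \_ `[0%R, 1%R]) \o *%R t) := mT _.
apply: eq_measurable_fun mhIt => u; rewrite inE => u01.
by rewrite /= patchE ifT // inE; exact: itv01_mul.
Qed.

Lemma within_continuous_dist_lt h x e : {within `[0, 1], continuous h} ->
  x \in `[0, 1] -> 0 < e ->
  exists2 r, 0 < r & forall z, z \in `[0, 1] -> `|x - z| < r -> `|h x - h z| < e.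
Proof.
move=> ch x01 e0; have := ch x; rewrite /continuous_at.
have [_|] := nbhs_subspaceP (`[0, 1] : set R) x; last by rewrite /= x01.
move/cvgrPdist_lt => /(_ e e0); rewrite near_withinE /= => /nbhs_ballP[r r0 hr].
by exists r => // z z01 xz; apply: hr.
Qed.

Lemma continuous_itv01_unif h e : {within `[0, 1], continuous h} -> 0 < e ->
  exists2 d, 0 < d & forall x y, x \in `[0, 1] -> y \in `[0, 1] ->
    `|x - y| < d -> `|h x - h y| < e.
Proof.
move=> ch e0.
have /compact_near_coveringP/near_covering_withinP cover := @segment_compact R 0 1.
pose close d x := forall z, z \in `[0, 1] -> `|x - z| < d -> `|h x - h z| < e.
have local x : `[0, 1]%classic x ->
    \forall x' \near x & d \near 0^'+, `[0, 1]%classic x' -> close d x'.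
  move=> x01; have [r r0 hr] := within_continuous_dist_lt ch x01 (divr_gt0 e0 (ltr0n R 2)).
  have r20 : 0 < r / 2 by rewrite divr_gt0.
  exists ([set y | `|x - y| < r / 2], [set d | 0 < d < r / 2]).
    split; first by apply/nbhs_ballP; exists (r / 2).
    apply/nbhs_ballP; exists (r / 2) => // d.
    rewrite /ball /= sub0r normrN => hd d0; rewrite d0 /=.
    exact: le_lt_trans (ler_norm _) hd.
  case=> x' d /= [xx' /andP[d0 dr]] x'01 z z01 x'z.
  have xz : `|x - z| < r.
    rewrite -(subrKA x') (le_lt_trans (ler_normD _ _)) // (splitr r) ltrD //.
    exact: lt_trans x'z dr.
  have xx'r : `|x - x'| < r by lra.
  have := hr _ z01 xz; have := hr _ x'01 xx'r.
  move=> hx' hz; rewrite distrC in hx'.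
  by rewrite -(subrKA (h x)) (le_lt_trans (ler_normD _ _)) // (splitr e) ltrD.
have := cover _ _ _ _ local; rewrite near_withinE /=.
move=> /(_ _) /nbhs_ballP[r /= r0 hr].
exists (r / 2) => [|x y x01 y01]; first exact: divr_gt0.
apply: hr => //; last exact: divr_gt0.
by rewrite /ball /= sub0r normrN gtr0_norm ?divr_gt0 // ltr_pdivrMr // ltr_pMr // ltr1n.
Qed.

Lemma itv01_MVT h k x y : {within `[0, 1], continuous h} ->
  (forall z : R, z \in `]0, 1[ -> is_derive z 1 h (k z)) ->
  x \in `[0, 1] -> y \in `[0, 1] ->
  exists2 c, c \in `[Num.min x y, Num.max x y] & h x - h y = k c * (x - y).
Proof.
move=> ch dh x01 y01; wlog xy : x y x01 y01 / x <= y.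
  move=> wlog_xy; have /orP[xy|yx] := le_total x y; first exact: wlog_xy.
  have [c cyx hc] := wlog_xy y x y01 x01 yx.
  by exists c; rewrite 1?minC 1?maxC // -opprB hc -mulrN opprB.
move: x01 y01; rewrite !in_itv /= => /andP[x0 _] /andP[_ y1].
have sub : `[x, y]%classic `<=` (`[0, 1]%classic : set R).
  by move=> z /=; rewrite !in_itv /= => /andP[? ?]; apply/andP; split; lra.
have dxy (z : R) : z \in `]x, y[ -> is_derive z 1 h (k z).
  by rewrite in_itv /= => /andP[? ?]; apply: dh; rewrite in_itv /=; apply/andP; split; lra.
have [c cxy hc] := MVT_segment xy dxy (continuous_subspaceW sub ch).
exists c; first by rewrite (min_idPl xy) (max_idPr xy).
by rewrite -opprB hc -mulrN opprB.
Qed.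

Lemma itv_minmax_dist_le x y c :
  c \in `[Num.min x y, Num.max x y] -> `|c - y| <= `|x - y|.
Proof.
have := ler_norm (x - y); have := ler_norm (y - x); rewrite distrC.
rewrite in_itv /= ler_norml ge_min le_max.
by have /orP[] := le_total x y => ? ? ? /andP[/orP[] ? /orP[] ?]; apply/andP; split; lra.
Qed.

Lemma itv01_dilation_taylor h k t e : {within `[0, 1], continuous h} ->
  (forall z : R, z \in `]0, 1[ -> is_derive z 1 h (k z)) ->
  {within `[0, 1], continuous k} -> 0 < e ->
  \forall s \near t, forall u, s \in `[0, 1] -> t \in `[0, 1] -> u \in `[0, 1] ->
    `|h (s * u) - h (t * u) - (s - t) * (u * k (t * u))| <= e * `|s - t|.
Proof.
move=> ch dh ck e0; have [d d0 hd] := continuous_itv01_unif ck e0.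
near=> s; have std : `|s - t| < d by near: s; exact: nbhs_dist_lt.
move=> u s01 t01 u01.
have su01 := itv01_mul s01 u01; have tu01 := itv01_mul t01 u01.
have [c csu hc] := itv01_MVT ch dh su01 tu01.
have c01 : c \in `[0, 1].
  move: csu su01 tu01; rewrite !in_itv /= ge_min le_max.
  by move=> /andP[/orP[] ? /orP[] ?] /andP[? ?] /andP[? ?]; apply/andP; split; lra.
have ctu := itv_minmax_dist_le csu.
have stu : `|s * u - t * u| <= `|s - t| by rewrite -mulrBl itv01_norm_mulr_le.
have kc : `|k c - k (t * u)| < e.
  by apply: hd => //; apply: le_lt_trans ctu (le_lt_trans stu std).
have -> : h (s * u) - h (t * u) - (s - t) * (u * k (t * u)) =
    (s - t) * u * (k c - k (t * u)) by rewrite hc; ring.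
rewrite normrM mulrC ler_pM ?itv01_norm_mulr_le //; exact: ltW.
Unshelve. all: by end_near. Qed.

Lemma itv01_dilation_continuous k t e : {within `[0, 1], continuous k} -> 0 < e ->
  \forall s \near t, forall u, s \in `[0, 1] -> t \in `[0, 1] -> u \in `[0, 1] ->
    `|k (s * u) - k (t * u)| < e.
Proof.
move=> ck e0; have [d d0 hd] := continuous_itv01_unif ck e0.
near=> s; have std : `|s - t| < d by near: s; exact: nbhs_dist_lt.
move=> u s01 t01 u01; apply: hd; rewrite ?itv01_mul //.
by rewrite -mulrBl (le_lt_trans (itv01_norm_mulr_le _ u01)).
Unshelve. all: by end_near. Qed.

End unit_interval.

Lemma sqr_sum_le {R : realFieldType} n (z : 'I_n -> R) :
  (\sum_(i < n) z i) ^+ 2 <= 2 ^+ n * \sum_(i < n) z i ^+ 2.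
Proof.
elim: n z => [|n IH] z; first by rewrite !big_ord0 expr0n /= mul1r.
rewrite !big_ord_recr /= [2 ^+ n.+1]exprS.
have := IH (fun i => z (widen_ord (leqnSn n) i)).
set S := \sum_(i < n) _; set Q := \sum_(i < n) _ => hS.
have Q0 : 0 <= Q by apply: sumr_ge0 => i _; exact: sqr_ge0.
have p1 : 1 <= 2 ^+ n :> R by rewrite exprn_ege1 //; lra.
have : z ord_max ^+ 2 <= 2 ^+ n * z ord_max ^+ 2 by rewrite ler_peMl // sqr_ge0.
have := sqr_ge0 (S - z ord_max); nra.
Qed.

Lemma ler_sqr_norm {R : realDomainType} (a m : R) : `|a| <= m -> a ^+ 2 <= m ^+ 2.
Proof. by move=> am; rewrite -real_normK ?num_real // lerXn2r ?nnegrE // (le_trans _ am). Qed.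

Section coefficient_form.
Context {R : realType} {n : nat}.
Implicit Types (A B : 'I_n -> R -> R) (V W : R -> 'rV[R]_n).

Definition coef_form A B V W (u : R) : R :=
  \sum_(i < n) (W u ord0 i * A i u + V u ord0 i * B i u).

Lemma sqr_coef_form_le A B V W (m u : R) :
  (forall i, `|A i u| <= m /\ `|B i u| <= m) ->
  coef_form A B V W u ^+ 2 <=
    2 ^+ n.+1 * m ^+ 2 * (sqn (V u) + sqn (W u)).
Proof.
move=> hAB; apply: le_trans (sqr_sum_le _) _.
rewrite exprS -mulrA -[leRHS]mulrA mulrCA ler_wpM2l ?exprn_ge0 //.
rewrite /sqn addrC -big_split /= !mulr_sumr; apply: ler_sum => i _.
have [hA hB] := hAB i.
set w := W u ord0 i; set v := V u ord0 i.
have hwA : (w * A i u) ^+ 2 <= m ^+ 2 * w ^+ 2.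
  by rewrite exprMn mulrC ler_wpM2r ?sqr_ge0 ?ler_sqr_norm.
have hvB : (v * B i u) ^+ 2 <= m ^+ 2 * v ^+ 2.
  by rewrite exprMn mulrC ler_wpM2r ?sqr_ge0 ?ler_sqr_norm.
have := sqr_ge0 (w * A i u - v * B i u); rewrite sqrrB sqrrD; lra.
Qed.

Lemma inH_measurable_der (P : 'M[R]_n) V W (i : 'I_n) : inH P V W ->
  measurable_fun (`[0%R, 1%R] : set R) (fun u => W u ord0 i).
Proof. by case=> intW _; apply/measurable_EFinP; exact: measurable_int (intW i). Qed.

Lemma inH_measurable (P : 'M[R]_n) V W (i : 'I_n) : inH P V W ->
  measurable_fun (`[0%R, 1%R] : set R) (fun u => V u ord0 i).
Proof.
case=> intW [_ [defV _]].
have cW := parameterized_integral_continuous ler01 (intW i).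
apply: (@eq_measurable_fun _ _ _ _ _ (fun u => V 0 ord0 i +
    parameterized_integral (@lebesgue_measure R) 0 u (fun s => W s ord0 i))).
  by move=> u; rewrite inE /= => u01; rewrite (defV u u01) !mxE.
apply: measurable_funD; first exact: measurable_cst.
exact: subspace_continuous_measurable_fun.
Qed.

Lemma measurable_coef_form (P : 'M[R]_n) A B V W : inH P V W ->
  (forall i, measurable_fun (`[0%R, 1%R] : set R) (A i)) ->
  (forall i, measurable_fun (`[0%R, 1%R] : set R) (B i)) ->
  measurable_fun (`[0%R, 1%R] : set R) (coef_form A B V W).
Proof.
move=> VW mA mB; apply: measurable_sum => i.
apply: measurable_funD; apply: measurable_funM => //.
  exact: inH_measurable_der VW.
exact: inH_measurable VW.
Qed.

Lemma Hnorm2_ge0 V W : (0 <= Hnorm2 V W)%E.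
Proof.
apply: integral_ge0 => u _; rewrite lee_fin.
by apply: addr_ge0; apply: sumr_ge0 => i _; exact: sqr_ge0.
Qed.

Lemma Qnorm2_coef_form_le (P : 'M[R]_n) A B V W (f : R -> R) (m : R) :
  inH P V W -> measurable_fun (`[0%R, 1%R] : set R) f ->
  (forall i u, u \in `[0, 1] -> `|A i u| <= m /\ `|B i u| <= m) ->
  {in `[0, 1], f =1 coef_form A B V W} ->
  (Qnorm2 f <= (2 ^+ n.+1 * m ^+ 2)%:E * Hnorm2 V W)%E.
Proof.
move=> VW mf hAB def_f.
have mVW : measurable_fun (`[0%R, 1%R] : set R) (fun u => sqn (V u) + sqn (W u)).
  apply: measurable_funD; apply: measurable_sum => i; apply: measurable_funX.
    exact: inH_measurable VW.
  exact: inH_measurable_der VW.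
apply: le_trans (_ : L2dist2_const f 0 <= _)%E; first by apply: ereal_inf_lbound; exists 0.
have c0 : (0 <= (2 ^+ n.+1 * m ^+ 2)%:E)%E.
  by rewrite lee_fin mulr_ge0 ?sqr_ge0 // exprn_ge0.
have VW0 u : u \in `[0, 1] -> (0 <= (sqn (V u) + sqn (W u))%:E)%E.
  by rewrite lee_fin addr_ge0 // sumr_ge0 // => i _; exact: sqr_ge0.
rewrite /L2dist2_const /Hnorm2 -ge0_integralZl //; last exact/measurable_EFinP.
apply: ge0_le_integral => //.
- by move=> u _; rewrite lee_fin sqr_ge0.
- apply/measurable_EFinP; apply: measurable_funX.
  by apply: measurable_funB => //; exact: measurable_cst.
- by apply: measurable_funeM; exact/measurable_EFinP.
- move=> u u01; rewrite -EFinM lee_fin subr0 def_f //.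
  by apply: sqr_coef_form_le => i; apply: hAB.
Qed.

Lemma Qnorm2_coef_form_le_sqr (P : 'M[R]_n) A B V W (f : R -> R) (m : R) :
  inH P V W -> measurable_fun (`[0%R, 1%R] : set R) f ->
  (forall i u, u \in `[0, 1] ->
     `|A i u| <= m / 2 ^+ n.+1 /\ `|B i u| <= m / 2 ^+ n.+1) ->
  {in `[0, 1], f =1 coef_form A B V W} ->
  (Qnorm2 f <= (m ^+ 2)%:E * Hnorm2 V W)%E.
Proof.
move=> VW mf hAB def_f; apply: le_trans (Qnorm2_coef_form_le VW mf hAB def_f) _.
apply: lee_wpmul2r; first exact: Hnorm2_ge0.
have N1 : 1 <= 2 ^+ n.+1 :> R by rewrite exprn_ege1 // ler1n.
have -> : 2 ^+ n.+1 * (m / 2 ^+ n.+1) ^+ 2 = m ^+ 2 / 2 ^+ n.+1 :> R.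
  by field; rewrite expf_neq0 // pnatr_eq0.
by rewrite lee_fin ler_pdivrMr ?(lt_le_trans ltr01) // ler_peMr // sqr_ge0.
Qed.

End coefficient_form.

Section dilated_form.
Context {R : realType} {n : nat} (P : 'M[R]_n).
Variables a0 a1 a2 : 'I_n -> R -> R.
Hypothesis ca0 : forall i, {within `[0, 1], continuous (a0 i)}.
Hypothesis ca1 : forall i, {within `[0, 1], continuous (a1 i)}.
Hypothesis ca2 : forall i, {within `[0, 1], continuous (a2 i)}.
Hypothesis da0 : forall i (x : R), x \in `]0, 1[ -> is_derive x 1 (a0 i) (a1 i x).
Hypothesis da1 : forall i (x : R), x \in `]0, 1[ -> is_derive x 1 (a1 i) (a2 i x).

Definition dilated_form (t : R) :=
  coef_form (fun i u => a0 i (t * u)) (fun i u => - (t * a1 i (t * u))).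

Definition dilated_form_deriv (t : R) :=
  coef_form (fun i u => u * a1 i (t * u))
            (fun i u => - (a1 i (t * u) + t * (u * a2 i (t * u)))).

Let coef_bounded : exists2 M : R, 0 <= M & forall i x, x \in `[0, 1] ->
  [/\ `|a0 i x| <= M, `|a1 i x| <= M & `|a2 i x| <= M].
Proof.
have [M M0 hM] := pinfty_ex_ge (num_real 0) (filterI (continuous_itv01_bounded ca0)
  (filterI (continuous_itv01_bounded ca1) (continuous_itv01_bounded ca2))).
by exists M => // i x x01; have [h0 [h1 h2]] := hM; split; [apply: h0|apply: h1|apply: h2].
Qed.

Lemma measurable_dilated_form t V W : t \in `[0, 1] -> inH P V W ->
  measurable_fun (`[0%R, 1%R] : set R) (dilated_form t V W).
Proof.
move=> t01 VW; apply: measurable_coef_form VW _ _ => i.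
  exact: measurable_itv01_dilation.
apply: measurable_funN; apply: measurable_funM; first exact: measurable_cst.
exact: measurable_itv01_dilation.
Qed.

Lemma measurable_dilated_form_deriv t V W : t \in `[0, 1] -> inH P V W ->
  measurable_fun (`[0%R, 1%R] : set R) (dilated_form_deriv t V W).
Proof.
move=> t01 VW; apply: measurable_coef_form VW _ _ => i.
  by apply: measurable_funM; [exact: measurable_id | exact: measurable_itv01_dilation].
apply: measurable_funN; apply: measurable_funD; first exact: measurable_itv01_dilation.
apply: measurable_funM; first exact: measurable_cst.
by apply: measurable_funM; [exact: measurable_id | exact: measurable_itv01_dilation].
Qed.

Lemma dilated_form_bounded t : t \in `[0, 1] -> exists C : R, forall V W,
  inH P V W -> (Qnorm2 (dilated_form t V W) <= C%:E * Hnorm2 V W)%E.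
Proof.
move=> t01; have [M _ hM] := coef_bounded.
exists (2 ^+ n.+1 * M ^+ 2) => V W VW.
apply: Qnorm2_coef_form_le VW (measurable_dilated_form t01 VW) _ _ => //.
move=> i u u01; have [h0 h1 _] := hM i _ (itv01_mul t01 u01).
by rewrite normrN normrM; split=> //; rewrite -[M]mul1r ler_pM ?itv01_norm_le1.
Qed.

Lemma dilated_form_deriv_bounded t : t \in `[0, 1] -> exists C : R, forall V W,
  inH P V W -> (Qnorm2 (dilated_form_deriv t V W) <= C%:E * Hnorm2 V W)%E.
Proof.
move=> t01; have [M M0 hM] := coef_bounded.
exists (2 ^+ n.+1 * (2 * M) ^+ 2) => V W VW.
apply: Qnorm2_coef_form_le VW (measurable_dilated_form_deriv t01 VW) _ _ => //.
move=> i u u01; have [_ h1 h2] := hM i _ (itv01_mul t01 u01).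
have u1 := itv01_norm_le1 u01; have t1 := itv01_norm_le1 t01.
have ua2 : `|u * a2 i (t * u)| <= M by rewrite normrM -[M]mul1r ler_pM.
split; first by rewrite normrM -[2 * M]mul1r ler_pM // (le_trans h1) // ler_peMl // ler1n.
rewrite normrN (le_trans (ler_normD _ _)) // normrM.
have : `|t| * `|u * a2 i (t * u)| <= M by rewrite -[M]mul1r ler_pM.
lra.
Qed.

Lemma dilated_form_differentiable (t eps : R) : t \in `[0, 1] -> 0 < eps ->
  \forall s \near t, s \in `[0, 1] -> forall V W, inH P V W ->
  (Qnorm2 (fun u => dilated_form s V W u - dilated_form t V W u
                    - (s - t) * dilated_form_deriv t V W u)%R
     <= ((eps * (s - t)) ^+ 2)%R%:E * Hnorm2 V W)%E.
Proof.
move=> t01 eps0; have [M M0 hM] := coef_bounded.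
pose e := eps / 2 ^+ n.+1; have e0 : 0 < e by rewrite divr_gt0 // exprn_gt0.
have e20 : 0 < e / 2 by rewrite divr_gt0.
near=> s => s01 V W VW.
have rem0 : forall i u, s \in `[0, 1] -> t \in `[0, 1] -> u \in `[0, 1] ->
    `|a0 i (s * u) - a0 i (t * u) - (s - t) * (u * a1 i (t * u))| <= e * `|s - t|.
  by near: s; apply: filter_forall => i; exact: itv01_dilation_taylor.
have rem1 : forall i u, s \in `[0, 1] -> t \in `[0, 1] -> u \in `[0, 1] ->
    `|a1 i (s * u) - a1 i (t * u) - (s - t) * (u * a2 i (t * u))| <= e / 2 * `|s - t|.
  by near: s; apply: filter_forall => i; exact: itv01_dilation_taylor.
have stM : `|s - t| * M <= e / 2 by near: s; exact: nbhs_dist_mul_le.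
have -> : (eps * (s - t)) ^+ 2 = (eps * `|s - t|) ^+ 2.
  by rewrite !exprMn real_normK ?num_real.
apply: (@Qnorm2_coef_form_le_sqr _ _ _
  (fun i u => a0 i (s * u) - a0 i (t * u) - (s - t) * (u * a1 i (t * u)))
  (fun i u => - (s * (a1 i (s * u) - a1 i (t * u) - (s - t) * (u * a2 i (t * u)))
                 + (s - t) ^+ 2 * (u * a2 i (t * u)))) _ _ _ _ VW).
- apply: measurable_funB; first apply: measurable_funB.
  + exact: measurable_dilated_form.
  + exact: measurable_dilated_form.
  + apply: measurable_funM; first exact: measurable_cst.
    exact: measurable_dilated_form_deriv.
- move=> i u u01; rewrite mulrAC -/e; split; first exact: rem0.
  have [_ _ a2M] := hM i _ (itv01_mul t01 u01).
  have ua2 : `|u * a2 i (t * u)| <= M.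
    by rewrite normrM -[M]mul1r ler_pM ?itv01_norm_le1.
  have srem1 : `|s * (a1 i (s * u) - a1 i (t * u) - (s - t) * (u * a2 i (t * u)))|
      <= e / 2 * `|s - t|.
    by rewrite normrM -[leRHS]mul1r ler_pM ?itv01_norm_le1 ?rem1.
  have st2 : `|(s - t) ^+ 2 * (u * a2 i (t * u))| <= `|s - t| * (e / 2).
    by rewrite normrM normrX expr2 -mulrA ler_wpM2l // (le_trans _ stM) // ler_wpM2l.
  rewrite normrN (le_trans (ler_normD _ _)) //; lra.
- move=> u u01; rewrite /dilated_form /dilated_form_deriv /coef_form.
  by rewrite mulr_sumr -!sumrB; apply: eq_bigr => i _; ring.
Unshelve. all: by end_near. Qed.

Lemma dilated_form_deriv_continuous (t eps : R) : t \in `[0, 1] -> 0 < eps ->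
  \forall s \near t, s \in `[0, 1] -> forall V W, inH P V W ->
  (Qnorm2 (fun u => dilated_form_deriv s V W u - dilated_form_deriv t V W u)%R
     <= (eps ^+ 2)%R%:E * Hnorm2 V W)%E.
Proof.
move=> t01 eps0; have [M M0 hM] := coef_bounded.
pose e := eps / 2 ^+ n.+1; have e30 : 0 < e / 3 by rewrite !divr_gt0 // exprn_gt0.
near=> s => s01 V W VW.
have d1 : forall i u, s \in `[0, 1] -> t \in `[0, 1] -> u \in `[0, 1] ->
    `|a1 i (s * u) - a1 i (t * u)| < e / 3.
  by near: s; apply: filter_forall => i; exact: itv01_dilation_continuous.
have d2 : forall i u, s \in `[0, 1] -> t \in `[0, 1] -> u \in `[0, 1] ->
    `|a2 i (s * u) - a2 i (t * u)| < e / 3.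
  by near: s; apply: filter_forall => i; exact: itv01_dilation_continuous.
have stM : `|s - t| * M <= e / 3 by near: s; exact: nbhs_dist_mul_le.
apply: (@Qnorm2_coef_form_le_sqr _ _ _
  (fun i u => u * a1 i (s * u) - u * a1 i (t * u))
  (fun i u => - (a1 i (s * u) + s * (u * a2 i (s * u)))
              - - (a1 i (t * u) + t * (u * a2 i (t * u)))) _ _ _ _ VW).
- by apply: measurable_funB; exact: measurable_dilated_form_deriv.
- move=> i u u01; rewrite -/e; have u1 := itv01_norm_le1 u01.
  have [_ _ a2M] := hM i _ (itv01_mul s01 u01).
  have {}d1 := d1 i u s01 t01 u01; have {}d2 := d2 i u s01 t01 u01.
  split; first by rewrite -mulrBr normrM -[leRHS]mul1r ler_pM //; lra.
  have -> : - (a1 i (s * u) + s * (u * a2 i (s * u)))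
            - - (a1 i (t * u) + t * (u * a2 i (t * u))) =
      - (a1 i (s * u) - a1 i (t * u)) - u * ((s - t) * a2 i (s * u))
      - u * (t * (a2 i (s * u) - a2 i (t * u))) by ring.
  have h1 : `|u * ((s - t) * a2 i (s * u))| <= e / 3.
    rewrite normrM -[leRHS]mul1r ler_pM // normrM (le_trans _ stM) //.
    by rewrite ler_wpM2l.
  have h2 : `|u * (t * (a2 i (s * u) - a2 i (t * u)))| <= e / 3.
    rewrite !normrM -[leRHS]mul1r ler_pM // -[leRHS]mul1r.
    by rewrite ler_pM ?itv01_norm_le1 //; exact: ltW.
  apply: le_trans (ler_normB _ _) _; apply: le_trans (lerD (ler_normB _ _) (lexx _)) _.
  rewrite normrN; lra.
- move=> u u01; rewrite /dilated_form_deriv /coef_form -sumrB.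
  by apply: eq_bigr => i _; ring.
Unshelve. all: by end_near. Qed.

Lemma C1_opfamily_dilated_form : C1_opfamily P dilated_form.
Proof.
split; first exact: dilated_form_bounded.
exists dilated_form_deriv; split; first by move=> *; exact: measurable_dilated_form_deriv.
split; first exact: dilated_form_deriv_bounded.
split=> t t01 eps eps0.
- have [d d0 hd] := near_exists_delta (dilated_form_differentiable t01 eps0).
  by exists d => // s s01 st V W; apply: hd.
- have [d d0 hd] := near_exists_delta (dilated_form_deriv_continuous t01 eps0).
  by exists d => // s s01 st V W; apply: hd.
Qed.

End dilated_form.

Section coordinates.
Context {R : realType} {n : nat}.
Implicit Types (A : set R) (Z : R -> 'rV[R]_n).

Lemma sym_bilinear_coordE (g : 'rV[R]_n -> 'rV[R]_n -> R) : sym_nondeg_bilinear g ->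
  forall x y, g x y = \sum_(i < n) x ord0 i *
    \sum_(j < n) g (delta_mx 0 i) (delta_mx 0 j) * y ord0 j.
Proof.
case=> lin [sym _].
have gsum (a : 'I_n -> R) (e : 'I_n -> 'rV[R]_n) z :
    g (\sum_(i < n) a i *: e i) z = \sum_(i < n) a i * g (e i) z.
  have g0 : g 0 z = 0 by have := lin 1 0 0 z; rewrite scale1r addr0 mul1r; lra.
  elim/big_ind2 : _ => // [x1 x2 y1 y2 <- <-|i _].
    by rewrite -[x2]scale1r lin mul1r scale1r.
  by rewrite -[a i *: e i]addr0 lin g0 addr0.
move=> x y; rewrite {1}(row_sum_delta x) gsum; apply: eq_bigr => i _; congr (_ * _).
by rewrite sym {1}(row_sum_delta y) gsum; apply: eq_bigr => j _; rewrite sym mulrC.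
Qed.

Lemma within_continuous_sum A (f : 'I_n -> R -> R) :
  (forall j, {within A, continuous (f j)}) ->
  {within A, continuous (fun x => \sum_(j < n) f j x)}.
Proof. by move=> cf x; apply: cvg_big => // [|j _]; [exact: add_continuous | exact: cf]. Qed.

Lemma within_continuous_mx_coord m p A (M : R -> 'M[R]_(m, p)) i j :
  {within A, continuous M} -> {within A, continuous (fun x => M x i j)}.
Proof.
move=> cM x.
exact: (@continuous_comp _ _ _ (from_subspace A M) (fun N : 'M[R]_(m, p) => N i j) x
  (cM x) (@coord_continuous _ _ _ i j (M x))).
Qed.

Lemma within_continuous_coord_comb A Z (c : 'I_n -> R) :
  (forall j, {within A, continuous (fun x => Z x ord0 j)}) ->
  {within A, continuous (fun x => \sum_(j < n) c j * Z x ord0 j)}.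
Proof.
by move=> cZ; apply: within_continuous_sum => j x; apply: cvgM; [exact: cvg_cst|exact: cZ].
Qed.

Lemma within_continuous_mulmx A Z (M : R -> 'M[R]_n) :
  {within A, continuous Z} -> {within A, continuous M} ->
  forall j, {within A, continuous (fun x => (Z x *m M x) ord0 j)}.
Proof.
move=> cZ cM j; under eq_fun do rewrite mxE.
by apply: within_continuous_sum => k x; apply: cvgM; exact: within_continuous_mx_coord.
Qed.

Lemma is_derive_coord_comb Z (c : 'I_n -> R) x : derivable Z x 1 ->
  is_derive x 1 (fun x => \sum_(j < n) c j * Z x ord0 j)
                (\sum_(j < n) c j * derive1 Z x ord0 j).
Proof.
move=> dZ; have dZj j : is_derive x 1 (fun y => Z y ord0 j) (derive1 Z x ord0 j).
  rewrite derive1E (derive_mx dZ) mxE; apply: derivableP.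
  exact: (derivable_mxP _ _ _).1 dZ ord0 j.
have -> : (fun x => \sum_(j < n) c j * Z x ord0 j) =
    \sum_(j < n) (fun x => c j * Z x ord0 j) by apply/funext => y; rewrite fct_sumE.
by apply: is_derive_sum => j.
Qed.

End coordinates.

Unset Implicit Arguments.

Theorem lemma4p3 (R : realType) (n : nat)
    (g : 'rV[R]_n -> 'rV[R]_n -> R) (P : 'M[R]_n)
    (Rc : R -> 'M[R]_n) (Y : R -> 'rV[R]_n) :
  sym_nondeg_bilinear g ->
  {within `[0%R, 1%R], continuous Rc} ->
  {within `[0%R, 1%R], continuous Y} ->
  {within `[0%R, 1%R], continuous (derive1 Y)} ->
  (forall t, t \in `]0%R, 1%R[ ->
     derivable Y t 1 /\ derivable (derive1 Y) t 1 /\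
     derive1 (derive1 Y) t = Y t *m Rc t) ->
  (forall t, t \in `[0%R, 1%R] -> g (Y t) (Y t) < 0) ->
  C1_opfamily P (Fop g Y).
Proof.
move=> gsym cRc cY cdY dY _.
pose gcomb (Z : R -> 'rV[R]_n) i x := \sum_(j < n) g (delta_mx 0 i) (delta_mx 0 j) * Z x ord0 j.
have -> : Fop g Y = dilated_form (gcomb Y) (gcomb (derive1 Y)).
  apply/funext => t; apply/funext => V; apply/funext => W; apply/funext => u.
  rewrite /Fop !(sym_bilinear_coordE gsym) /dilated_form /coef_form.
  by rewrite mulr_sumr -sumrN -big_split; apply: eq_bigr => i _ /=; rewrite /gcomb; ring.
apply: (@C1_opfamily_dilated_form _ _ P _ _ (gcomb (fun x => Y x *m Rc x))) => i.
- by apply: within_continuous_coord_comb => j; exact: within_continuous_mx_coord.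
- by apply: within_continuous_coord_comb => j; exact: within_continuous_mx_coord.
- by apply: within_continuous_coord_comb; exact: within_continuous_mulmx.
- by move=> x /dY[dYx _]; exact: is_derive_coord_comb.
- move=> x /dY[_ [ddYx ddYE]].
  by have := is_derive_coord_comb (fun j => g (delta_mx 0 i) (delta_mx 0 j)) ddYx; rewrite ddYE.
Qed.
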